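(* Assume the setting of the context. Let $\delta>0$, let $\alpha$ be a finite measurable partition of $\Theta$ with $\operatorname{diam}(\alpha)<\delta$, and let $\beta$ be a partition of $\mathcal{X}$ according to central words with $\operatorname{diam}(\beta)<\delta$. Then for every Borel probability measure $\eta$ on $\Theta\times\mathcal{X}$, every $y\in\mathcal{Y}$, and every $n\ge1$, \[ \int g_n(\theta,x,y)\,d\eta(\theta,x)-KL(\eta:P_0\mid\alpha\times\beta_n)\le\log\Bigl[\int\exp(g_n(\theta,x,y))\,dP_0(\theta,x)\Bigr]+\sum_{k=0}^{n-1}\rho_\delta(T^ky). \]
   Context: Observed system: $\mathcal{Y}$ is a complete separable metric space, $T$ is Borel, and $\nu$ is a $T$-invariant ergodic probability measure. Model system: $\mathcal{X}\subset\mathcal{A}^{\mathbb{Z}}$ is a mixing shift of finite type, with left shift $(Sx)_i=x_{i+1}$ and metric $d_{\mathcal{X}}(x,y)=2^{-\inf\{|m|:x_m\ne y_m\}}$. $\Theta$ is a compact metric space with metric $d_\Theta$, and $\{\mu_\theta\}$ is the family of Gibbs measures of a regular (Hölder-norm-continuous) family of Hölder potentials $f_\theta$. Loss: $\ell:\Theta\times\mathcal{X}\times\mathcal{Y}\to\mathbb{R}$ is continuous, with $\sup_{\theta,x}|\ell(\theta,x,y)|\le\ell^*(y)$ for a $\nu$-integrable $\ell^*$. For each $\delta>0$, $\rho_\delta:\mathcal{Y}\to(0,\infty)$ is a measurable function with $|\ell(\theta,x,y)-\ell(\theta',x',y)|\le\rho_\delta(y)$ whenever $\max(d_\Theta(\theta,\theta'),d_{\mathcal{X}}(x,x'))\le\delta$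 (and $\int\rho_\delta d\nu\to0$ as $\delta\to0^+$). Set $g=-\ell$ and $g_n(\theta,x,y)=-\sum_{k=0}^{n-1}\ell(\theta,S^kx,T^ky)$. Prior: $\pi_0$ is a fully supported probability on $\Theta$, and $P_0(E)=\int\int\mathbf{1}_E\,d\mu_\theta\,d\pi_0$. Partitions: a partition of $\mathcal{X}$ according to central words is one of the form $\{[x_{-m}^m]:x\in\mathcal{X}\}$ for some $m\ge0$, where $[x_{-m}^m]=\{z:z_i=x_i,|i|\le m\}$. Also $\beta_n=\bigvee_{k<n}S^{-k}\beta$ and $\alpha\times\beta_n=\{A\times B\}$. Divergence: $KL(\eta:\gamma\mid\xi)=\sum_{C\in\xi}\eta(C)\log(\eta(C)/\gamma(C))$ if $\gamma(C)=0\Rightarrow\eta(C)=0$ on $\xi$, and $+\infty$ otherwise, with $0\log(0/x)=0$. *)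

From HB Require Import structures.
From mathcomp Require Import all_boot all_order all_algebra.
From mathcomp Require Import all_classical all_reals all_analysis.

Set Implicit Arguments.
Unset Strict Implicit.
Unset Printing Implicit Defensive.

Import Order.TTheory GRing.Theory Num.Theory.
Local Open Scope classical_set_scope.
Local Open Scope ring_scope.

(* Pointed metric spaces (the library metricType is not pointed, but  *)
(* a pointed carrier is needed to build the Borel measurable type).   *)
#[short(type="pmetricType")]
HB.structure Definition PMetric (K : numDomainType) :=
  { M of Pointed M & Metric K M }.

Definition Borel (R : realType) (M : pmetricType R) :=
  g_sigma_algebraType (@open M).

Definition metric_complete (R : realType) (M : pmetricType R) :=
  forall u : nat -> M,
    (forall e : R, 0 < e -> exists N : nat, forall m n : nat,
        (N <= m)%N -> (N <= n)%N -> mdist (u m) (u n) < e) ->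
    exists l : M, forall e : R, 0 < e -> exists N : nat, forall n : nat,
        (N <= n)%N -> mdist (u n) l < e.

Definition metric_separable (R : realType) (M : pmetricType R) :=
  exists D : set M, countable D /\
    forall (y : M) (e : R), 0 < e -> exists2 z, D z & mdist y z < e.

Definition SS (A : finType) (a0 : A) := int -> A.
HB.instance Definition _ (A : finType) (a0 : A) := gen_eqMixin (SS a0).
HB.instance Definition _ (A : finType) (a0 : A) := gen_choiceMixin (SS a0).
HB.instance Definition _ (A : finType) (a0 : A) :=
  isPointed.Build (SS a0) (fun _ => a0).

Definition shift (A : finType) (a0 : A) (x : SS a0) : SS a0 :=
  fun i => x (i + 1)%R.

Definition dX (R : realType) (A : finType) (a0 : A) (x y : SS a0) : R :=
  match ereal_inf [set ((absz m)%:R : R)%:E | m in [set m : int | x m <> y m]]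
  with
  | r%:E => 2 `^ (- r)
  | _ => 0
  end.
Arguments dX {R A a0}.

Definition dX_open (R : realType) (A : finType) (a0 : A) (U : set (SS a0)) :=
  forall x, U x -> exists2 r : R, 0 < r & [set y | dX x y < r] `<=` U.

Definition SSB (R : realType) (A : finType) (a0 : A) :=
  g_sigma_algebraType (@dX_open R A a0).

Definition is_SFT (A : finType) (a0 : A) (Xs : set (SS a0)) :=
  exists (N : nat) (W : {set N.-tuple A}),
    Xs = [set x | forall i : int, [tuple x (i + (nat_of_ord j)%:Z)%R | j < N] \in W].

Definition top_mixing (R : realType) (A : finType) (a0 : A) (Xs : set (SS a0)) :=
  forall U V : set (SS a0), dX_open R U -> dX_open R V ->
    (Xs `&` U) !=set0 -> (Xs `&` V) !=set0 ->
    exists N : nat, forall n : nat, (N <= n)%N ->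
      exists z, [/\ Xs z, U z & V (iter n (@shift A a0) z)].

Definition cyl (A : finType) (a0 : A) (m : nat) (x : SS a0) : set (SS a0) :=
  [set z | forall i : int, (absz i <= m)%N -> z i = x i].

Definition cyl0 (A : finType) (a0 : A) (n : nat) (x : SS a0) : set (SS a0) :=
  [set z | forall i : nat, (i < n)%N -> z i%:Z = x i%:Z].

Definition birkhoff (R : realType) (A : finType) (a0 : A) (f : SS a0 -> R)
    (n : nat) (x : SS a0) : R :=
  \sum_(k < n) f (iter k (@shift A a0) x).

Definition is_holder (R : realType) (A : finType) (a0 : A) (Xs : set (SS a0))
    (a : R) (f : SS a0 -> R) :=
  exists C : R, forall x y, Xs x -> Xs y -> `|f x - f y| <= C * dX x y `^ a.

Definition holder_norm (R : realType) (A : finType) (a0 : A) (Xs : set (SS a0))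
    (a : R) (f : SS a0 -> R) : \bar R :=
  (ereal_sup [set `|f x|%:E | x in Xs] +
   ereal_sup [set (`|f xy.1 - f xy.2| / dX xy.1 xy.2 `^ a)%:E
               | xy in [set xy : SS a0 * SS a0 | [/\ Xs xy.1, Xs xy.2 & xy.1 <> xy.2]]])%E.

Definition regular_family (R : realType) (Th : pmetricType R)
    (A : finType) (a0 : A) (Xs : set (SS a0)) (f : Th -> SS a0 -> R) :=
  exists a : R, [/\ 0 < a <= 1,
    (forall th, is_holder Xs a (f th)) &
    (forall (th : Th) (e : R), 0 < e -> exists2 r : R, 0 < r &
       forall th' : Th, mdist th th' < r ->
         (holder_norm Xs a (f th \- f th')%R < e%:E)%E)].

Definition is_Gibbs (R : realType) (A : finType) (a0 : A) (Xs : set (SS a0))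
    (f : SS a0 -> R) (mu : probability (SSB R a0) R) :=
  [/\ mu Xs = 1%E,
      (forall E : set (SSB R a0), measurable E ->
          mu (@shift A a0 @^-1` E) = mu E) &
      exists C P : R, 0 < C /\
        forall x, Xs x -> forall n : nat, (0 < n)%N ->
          C^-1 <= fine (mu (Xs `&` cyl0 n x)) / expR (- n%:R * P + birkhoff f n x)
          <= C].

Definition T_invariant (R : realType) d (Y : measurableType d)
    (nu : probability Y R) (T : Y -> Y) :=
  forall E : set Y, measurable E -> nu (T @^-1` E) = nu E.

Definition T_ergodic (R : realType) d (Y : measurableType d)
    (nu : probability Y R) (T : Y -> Y) :=
  forall E : set Y, measurable E -> T @^-1` E = E -> nu E = 0%E \/ nu E = 1%E.

Definition full_support (R : realType) (Th : pmetricType R)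
    (pi0 : probability (Borel Th) R) :=
  forall U : set Th, open U -> U !=set0 -> (0 < pi0 U)%E.

Definition loss_continuous (R : realType) (Th Y : pmetricType R)
    (A : finType) (a0 : A) (Xs : set (SS a0)) (l : Th -> SS a0 -> Y -> R) :=
  forall th x y, Xs x -> forall e : R, 0 < e -> exists2 r : R, 0 < r &
    forall th' x' y', Xs x' -> mdist th th' < r -> dX x x' < r ->
      mdist y y' < r -> `|l th x y - l th' x' y'| < e.

Definition gn (R : realType) (Th Y : pmetricType R) (A : finType) (a0 : A)
    (l : Th -> SS a0 -> Y -> R) (T : Y -> Y) (n : nat)
    (th : Th) (x : SS a0) (y : Y) : R :=
  - \sum_(k < n) l th (iter k (@shift A a0) x) (iter k T y).

Definition finite_meas_partition d (T : measurableType d) (al : set (set T)) :=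
  [/\ finite_set al,
      (forall C, al C -> measurable C),
      (forall C D, al C -> al D -> C <> D -> C `&` D = set0) &
      \bigcup_(C in al) C = setT].

Definition diam (R : realType) (T : Type) (dist : T -> T -> R) (C : set T)
    : \bar R :=
  ereal_sup [set (dist x y)%:E | x in C & y in C].

Definition part_diam (R : realType) (T : Type) (dist : T -> T -> R)
    (al : set (set T)) : \bar R :=
  ereal_sup [set diam dist C | C in al].

Definition central_partition (A : finType) (a0 : A) (Xs : set (SS a0))
    (be : set (set (SS a0))) :=
  exists m : nat, be = [set Xs `&` cyl m x | x in Xs].

Definition join_iter (A : finType) (a0 : A) (be : set (set (SS a0))) (n : nat)
    : set (set (SS a0)) :=
  [set C | C !=set0 /\ exists B : nat -> set (SS a0),
     (forall k, (k < n)%N -> be (B k)) /\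
     C = \bigcap_(k in [set k : nat | (k < n)%N]) (iter k (@shift A a0) @^-1` B k)].

Definition prod_part (T1 T2 : Type) (al : set (set T1)) (be : set (set T2))
    : set (set (T1 * T2)) :=
  [set A `*` B | A in al & B in be].

Definition klterm (R : realType) (a b : R) : R :=
  if a == 0 then 0 else a * ln (a / b).

Definition KL (R : realType) (T : Type) (eta gam : set T -> \bar R)
    (xi : set (set T)) : \bar R :=
  if `[< forall C, xi C -> gam C = 0%E -> eta C = 0%E >] then
    (\sum_(C \in xi) klterm (fine (eta C)) (fine (gam C)))%:E
  else +oo%E.

(* On a cell of alpha x beta_n any two points are delta-close in Theta and
   their first n shifts are delta-close in X, so g_n(., ., y) oscillates by at
   most V := sum_(k<n) rho_delta(T^k y) there.  Let c_C be the supremum of g_n on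
   the cell C.  Then int g_n d eta <= sum_C eta(C) c_C, while
   int exp(g_n) dP_0 >= e^(-V) sum_C P_0(C) e^(c_C), and the claim reduces to the
   finite Gibbs variational inequality
   sum_C p_C c_C - KL(p : q) <= ln sum_C q_C e^(c_C). *)

From mathcomp Require Import all_boot all_order all_algebra.
From mathcomp Require Import all_classical all_reals all_analysis.
From mathcomp Require Import measurable_realfun finmap ring lra zify.

Set Implicit Arguments.
Unset Strict Implicit.
Unset Printing Implicit Defensive.

Import Order.TTheory GRing.Theory Num.Theory.
Local Open Scope classical_set_scope.
Local Open Scope ring_scope.

(* The loss sums g_n are not known to be measurable, so only one side of each
   comparison is assumed measurable; a nonnegative integral is a supremum over
   simple minorants, which makes this enough. *)
Section integral_comparison.
Context d (T : measurableType d) (R : realType) (mu : {measure set T -> \bar R}).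
Local Open Scope ereal_scope.
Import HBNNSimple.

Lemma ge0_le_integralT (f g : T -> \bar R) :
  (forall x, 0 <= f x) -> (forall x, f x <= g x) ->
  \int[mu]_x f x <= \int[mu]_x g x.
Proof.
move=> f0 fg; have g0 x : 0 <= g x := le_trans (f0 x) (fg x).
rewrite !ge0_integralTE//; apply: ereal_sup_le => _ [h hf <-].
by exists h => //= x; exact: le_trans (hf x) (fg x).
Qed.

Lemma ae_ge0_le_measurable_integral (f g : T -> \bar R) :
  (forall x, 0 <= f x) -> (forall x, 0 <= g x) -> measurable_fun setT g ->
  (\forall x \ae mu, f x <= g x) -> \int[mu]_x f x <= \int[mu]_x g x.
Proof.
move=> f0 g0 mg fg; rewrite [leLHS]ge0_integralTE//.
apply: ge_ereal_sup => _ [h hf <-]; rewrite -integralT_nnsfun.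
apply: ae_ge0_le_integral => //.
- by move=> x _; rewrite lee_fin.
- by apply/measurable_EFinP; exact: measurable_funPT.
- by apply: filterS fg => x fgx _; exact: le_trans (hf x) fgx.
Qed.

Lemma ae_ge0_measurable_le_integral (f g : T -> \bar R) :
  (forall x, 0 <= f x) -> (forall x, 0 <= g x) -> measurable_fun setT f ->
  (\forall x \ae mu, f x <= g x) -> \int[mu]_x f x <= \int[mu]_x g x.
Proof.
move=> f0 g0 mf [N [mN N0 fgN]].
pose f' x := f x * (\1_(~` N) x)%:E.
have f'0 x : 0 <= f' x by rewrite mule_ge0// lee_fin.
apply: (@le_trans _ _ (\int[mu]_x f' x)).
  apply: ae_ge0_le_measurable_integral => //.
    apply: emeasurable_funM => //; apply/measurable_EFinP.
    exact/measurable_indic/measurableC.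
  exists N; split => // x /= f'f; apply: contrapT => Nx; apply: f'f.
  by rewrite /f' indicE mem_set// mule1.
apply: ge0_le_integralT => // x; rewrite /f' indicE.
have [/set_mem Nx|Nx] := boolP (x \in ~` N); first by rewrite mule1; apply: contrapT => /fgN.
by rewrite mule0.
Qed.

Lemma ae_le_measurable_integral (f g : T -> \bar R) :
  measurable_fun setT g -> (\forall x \ae mu, f x <= g x) ->
  \int[mu]_x f x <= \int[mu]_x g x.
Proof.
move=> mg fg; rewrite integralE [leRHS]integralE; apply: leeB.
- apply: ae_ge0_le_measurable_integral => //; first exact: measurable_funepos.
  by apply: filterS fg => x fgx; rewrite !funeposE le_max2.
- apply: ae_ge0_measurable_le_integral => //; first exact: measurable_funeneg.
  by apply: filterS fg => x fgx; rewrite !funenegE le_max2// leeN2.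
Qed.

End integral_comparison.

Section step_function.
Context d (T : measurableType d) (R : realType).
Implicit Types (s : seq (set T)) (a : set T -> R).

Definition step_fun s a (z : T) : R := \sum_(C <- s) a C * \1_C z.

Let step_funE s a :
  step_fun s a = fun z => \sum_(C <- s) (if C \in s then a C * \1_C z else 0).
Proof. by apply/funext => z; rewrite /step_fun big_seq big_mkcond. Qed.

Lemma measurable_step_fun s a : {in s, forall C, measurable C} ->
  measurable_fun setT (step_fun s a).
Proof.
move=> ms; rewrite step_funE; apply: measurable_sum => C.
case: (boolP (C \in s)) => [/ms mC|_]; last exact: measurable_cst.
by apply: measurable_funM => //; exact: measurable_indic.
Qed.

Lemma integral_step_fun (mu : {finite_measure set T -> \bar R}) s a :
  {in s, forall C, measurable C} ->
  (\int[mu]_z (step_fun s a z)%:E = (\sum_(C <- s) a C * fine (mu C))%:E)%E.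
Proof.
move=> ms; rewrite step_funE; under eq_integral do rewrite -sumEFin.
rewrite integral_sum// => [|C]; last first.
  case: (boolP (C \in s)) => [/ms mC|_]; last exact: integrable0.
  under eq_fun do rewrite EFinM.
  exact: integrableZl (integrable_indic _ mC).
rewrite -sumEFin big_seq [RHS]big_seq; apply: eq_bigr => C sC.
rewrite sC; under eq_integral do rewrite EFinM.
have mC := ms C sC; rewrite integralZl//; last exact: integrable_indic.
by rewrite integral_indic// setIT EFinM fineK// fin_num_measure.
Qed.

Lemma step_fun_cell s a C z : uniq s ->
  {in s &, forall C C', C `&` C' !=set0 -> C = C'} ->
  C \in s -> C z -> step_fun s a z = a C.
Proof.
move=> us ds sC Cz; rewrite /step_fun (bigD1_seq C)//= indicE mem_set// mulr1.
rewrite big_seq_cond big1 ?addr0// => C' /andP[sC' C'C].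
rewrite indicE; case: (boolP (z \in C')) => [/set_mem C'z|_]; last by rewrite mulr0.
by move: C'C; rewrite (ds C' C sC' sC) ?eqxx//; exists z.
Qed.

Lemma step_fun_outside s a z : (forall C, C \in s -> ~ C z) -> step_fun s a z = 0.
Proof.
move=> nz; rewrite /step_fun big_seq big1// => C sC.
by rewrite indicE memNset ?mulr0//; exact: nz.
Qed.

End step_function.

Lemma klterm_ge (R : realType) (p q t : R) : 0 <= p -> 0 <= q -> (q = 0 -> p = 0) ->
  p * t - q * expR t + p <= klterm p q.
Proof.
move=> p0 q0 qp; rewrite /klterm; have [->|pn0] := eqVneq p 0.
  by rewrite !mul0r add0r addr0 oppr_le0 mulr_ge0 ?expR_ge0.
have pp : 0 < p by rewrite lt_def pn0.
have qq : 0 < q by rewrite lt_def q0 andbT; apply: contra pn0 => /eqP/qp->.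
set w := q * expR t / p.
have w0 : 0 < w by rewrite divr_gt0 ?mulr_gt0 ?expR_gt0.
have lnw : ln w = t - ln (p / q).
  rewrite /w ln_div ?posrE ?mulr_gt0 ?expR_gt0// lnM ?posrE ?expR_gt0//.
  by rewrite expRK ln_div ?posrE//; ring.
have pw : p * (w - 1) = q * expR t - p by rewrite /w; field; rewrite gt_eqF.
have : p * ln w <= p * (w - 1).
  rewrite ler_wpM2l//; have := @le_ln1Dx _ (w - 1).
  by rewrite addrCA subrr addr0; apply; lra.
rewrite lnw pw mulrBr; lra.
Qed.

Section gibbs_variational.
Context (R : realType) (I : eqType) (s : seq I) (p q c : I -> R).
Hypotheses (p_ge0 : {in s, forall i, 0 <= p i}) (q_ge0 : {in s, forall i, 0 <= q i}).
Hypotheses (pq_ac : {in s, forall i, q i = 0 -> p i = 0}) (p_sum1 : \sum_(i <- s) p i = 1).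

Lemma sum_q_expR_gt0 : 0 < \sum_(i <- s) q i * expR (c i).
Proof.
have [i si pi0] : exists2 i, i \in s & p i != 0.
  apply/hasP; apply: contraT; rewrite -all_predC => /allP pn0; move: p_sum1.
  rewrite big_seq big1 => [/eqP|j /pn0 /negPn /eqP//]; by rewrite eq_sym oner_eq0.
have qi : 0 < q i by rewrite lt_def q_ge0// andbT; apply: contra pi0 => /eqP/(pq_ac si)->.
rewrite (big_rem i)//= ltr_wpDr ?mulr_gt0 ?expR_gt0//.
by rewrite big_seq sumr_ge0// => j /mem_rem js; rewrite mulr_ge0 ?q_ge0 ?expR_ge0.
Qed.

Lemma gibbs_variational_ineq : \sum_(i <- s) p i * c i - \sum_(i <- s) klterm (p i) (q i)
  <= ln (\sum_(i <- s) q i * expR (c i)).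
Proof.
have Z0 := sum_q_expR_gt0; set Z := \sum_(i <- s) q i * _ in Z0 *.
have : \sum_(i <- s) (p i * (c i - ln Z) - q i * expR (c i - ln Z) + p i)
    <= \sum_(i <- s) klterm (p i) (q i).
  rewrite big_seq [leRHS]big_seq; apply: ler_sum => i si.
  by apply: klterm_ge; [exact: p_ge0|exact: q_ge0|exact: pq_ac].
have E i : p i * (c i - ln Z) - q i * expR (c i - ln Z) + p i =
    p i * c i - ln Z * p i - Z^-1 * (q i * expR (c i)) + p i.
  by rewrite expRD expRN lnK ?posrE//; ring.
under eq_bigr do rewrite E.
rewrite !big_split /= !sumrN -!mulr_sumr p_sum1 -/Z mulVf ?gt_eqF//; lra.
Qed.

End gibbs_variational.

Section variational_bound.
Context d (T : measurableType d) (R : realType).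
Variables (s : seq (set T)) (F : T -> R) (V : R).
Hypotheses (s_uniq : uniq s) (s_meas : {in s, forall C, measurable C}).
Hypothesis s_triv : {in s &, forall C C', C `&` C' !=set0 -> C = C'}.
Hypothesis F_osc : {in s, forall C z z', C z -> C z' -> F z <= F z' + V}.

Let covers (mu : set T -> \bar R) := \forall z \ae mu, exists2 C, C \in s & C z.

Lemma sum_probability_cells (mu : probability T R) :
  covers mu -> \sum_(C <- s) fine (mu C) = 1.
Proof.
move=> cov; apply: EFin_inj.
have <- : (\int[mu]_z (step_fun s (fun=> 1) z)%:E = 1%:E)%E.
  rewrite -(probability_setT mu) -[mu _]mul1e -integral_cst//.
  apply: ae_eq_integral => //; first exact/measurable_EFinP/measurable_step_fun.
  by apply: filterS cov => z [C sC Cz] _; rewrite (step_fun_cell _ s_uniq s_triv sC Cz).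
rewrite integral_step_fun//; congr EFin; by apply: eq_bigr => C _; rewrite mul1r.
Qed.

Lemma integral_le_step_fun (mu : probability T R) (G : T -> R) (a : set T -> R) :
  covers mu -> {in s, forall C z, C z -> G z <= a C} ->
  (\int[mu]_z (G z)%:E <= (\sum_(C <- s) a C * fine (mu C))%:E)%E.
Proof.
move=> cov Ga; rewrite -integral_step_fun//.
apply: ae_le_measurable_integral; first exact/measurable_EFinP/measurable_step_fun.
apply: filterS cov => z [C sC Cz].
by rewrite lee_fin (step_fun_cell _ s_uniq s_triv sC Cz)// Ga.
Qed.

Lemma step_fun_le_integral (mu : probability T R) (G : T -> R) (a : set T -> R) :
  (forall z, 0 <= G z) -> {in s, forall C, 0 <= a C} ->
  {in s, forall C z, C z -> a C <= G z} ->
  ((\sum_(C <- s) a C * fine (mu C))%:E <= \int[mu]_z (G z)%:E)%E.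
Proof.
move=> G0 a0 aG; rewrite -integral_step_fun//; apply: ge0_le_integralT => z.
  by rewrite lee_fin /step_fun big_seq sumr_ge0// => C sC; rewrite mulr_ge0 ?a0.
rewrite lee_fin; have [[C sC Cz]|nz] := pselect (exists2 C, C \in s & C z).
  by rewrite (step_fun_cell _ s_uniq s_triv sC Cz) aG.
by rewrite step_fun_outside// => C sC Cz; apply: nz; exists C.
Qed.

Let c C := sup (F @` C).

Let le_sup_cell : {in s, forall C z, C z -> F z <= c C}.
Proof.
move=> C sC z Cz; apply: ub_le_sup; last by exists z.
by exists (F z + V) => _ [w Cw <-]; exact: (F_osc sC Cw Cz).
Qed.

Let sup_cell_le : {in s, forall C z, C z -> c C <= F z + V}.
Proof.
move=> C sC z Cz; apply: ge_sup; first by exists (F z), z.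
by move=> _ [w Cw <-]; exact: (F_osc sC Cw Cz).
Qed.

Lemma variational_bound_seq (eta P : probability T R) :
  covers eta -> covers P -> {in s, forall C, P C = 0 -> eta C = 0} ->
  (\int[eta]_z (F z)%:E - (\sum_(C <- s) klterm (fine (eta C)) (fine (P C)))%:E
   <= (ln (fine (\int[P]_z (expR (F z))%:E)) + V)%:E)%E.
Proof.
move=> eta_cov P_cov ac.
set p := fun C => fine (eta C); set q := fun C => fine (P C).
have p_ge0 : {in s, forall C, 0 <= p C} by move=> C _; exact: fine_ge0.
have q_ge0 : {in s, forall C, 0 <= q C} by move=> C _; exact: fine_ge0.
have pq_ac : {in s, forall C, q C = 0 -> p C = 0}.
  move=> C sC qC; have mC := s_meas sC.
  have PC : P C = 0%E by apply/eqP; rewrite -fine_eq0 ?fin_num_measure//; exact/eqP.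
  by rewrite /p (ac _ sC PC).
have p_sum1 : \sum_(C <- s) p C = 1 := sum_probability_cells eta_cov.
have Z0 := sum_q_expR_gt0 c q_ge0 pq_ac p_sum1.
set Z := \sum_(C <- s) q C * _ in Z0.
set I := (\int[P]_z (expR (F z))%:E)%E.
have Ifin : I \is a fin_num.
  have I0 : (0 <= I)%E by apply: integral_ge0 => z _; rewrite lee_fin expR_ge0.
  rewrite ge0_fin_numE//.
  apply: le_lt_trans (ltry (\sum_(C <- s) expR (c C) * q C)).
  by apply: integral_le_step_fun => // C sC z Cz; rewrite ler_expR le_sup_cell.
have ZI : Z * expR (- V) <= fine I.
  rewrite -lee_fin fineK//.
  have -> : Z * expR (- V) = \sum_(C <- s) expR (c C - V) * q C.
    by rewrite /Z mulr_suml; apply: eq_bigr => C _; rewrite expRD; ring.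
  apply: step_fun_le_integral => [z|C _|C sC z Cz]; rewrite ?expR_ge0//.
  by rewrite ler_expR lerBlDr sup_cell_le.
have lnZI : ln Z - V <= ln (fine I).
  have -> : ln Z - V = ln (Z * expR (- V)) by rewrite lnM ?posrE ?expR_gt0// expRK.
  by rewrite ler_ln ?posrE ?mulr_gt0 ?expR_gt0// (lt_le_trans _ ZI)// mulr_gt0 ?expR_gt0.
have Fle : (\int[eta]_z (F z)%:E <= (\sum_(C <- s) c C * p C)%:E)%E.
  exact: integral_le_step_fun eta_cov le_sup_cell.
apply: le_trans (leeB Fle (lexx _)) _; rewrite -EFinB lee_fin.
have := gibbs_variational_ineq c p_ge0 q_ge0 pq_ac p_sum1.
under eq_bigr do rewrite mulrC; rewrite -/Z; lra.
Qed.

End variational_bound.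

Lemma KL_variational_bound d (T : measurableType d) (R : realType)
    (eta P : probability T R) (xi : set (set T)) (F : T -> R) (V : R) :
  finite_set xi -> (forall C, xi C -> measurable C) -> trivIset xi id ->
  (\forall z \ae eta, exists2 C, xi C & C z) ->
  (\forall z \ae P, exists2 C, xi C & C z) ->
  (forall C z z', xi C -> C z -> C z' -> F z <= F z' + V) ->
  (\int[eta]_z (F z)%:E - KL eta P xi
     <= (ln (fine (\int[P]_z (expR (F z))%:E)) + V)%:E)%E.
Proof.
move=> xi_fin xi_meas xi_triv eta_cov P_cov F_osc.
rewrite /KL; case: asboolP => [ac|_]; last by rewrite addeNy leNye.
have xiE C : (C \in fset_set xi) = (C \in xi) by rewrite in_fset_set.
rewrite fsbig_finite//; apply: variational_bound_seq.
- exact: fset_uniq.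
- by move=> C; rewrite xiE => /set_mem/xi_meas.
- by move=> C C'; rewrite !xiE => /set_mem xC /set_mem xC'; exact: xi_triv.
- by move=> C; rewrite xiE => /set_mem /F_osc.
- by apply: filterS eta_cov => z [C xC Cz]; exists C; rewrite ?xiE ?mem_set.
- by apply: filterS P_cov => z [C xC Cz]; exists C; rewrite ?xiE ?mem_set.
- by move=> C; rewrite xiE => /set_mem /ac.
Qed.

Section shift_space.
Context (R : realType) (A : finType) (a0 : A).
Local Notation SSa := (SS a0).
Local Notation sh := (@shift A a0).

Lemma iter_shiftE k (x : SSa) i : iter k sh x i = x (i + k%:Z).
Proof.
elim: k i => [|k IH] i /=; first by rewrite addr0.
by rewrite /shift IH intS addrA.
Qed.

Lemma dX_lt_agree (x y : SSa) (M : nat) : (dX x y : R) < 2 `^ (- M%:R) ->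
  forall i, (absz i <= M)%N -> y i = x i.
Proof.
move=> dxy i iM; apply: contrapT => /nesym yx; move: dxy; apply/negP; rewrite -leNgt /dX.
set S := [set _ | m in _].
have S0 : lbound S 0%E by move=> _ [j _ <-]; rewrite lee_fin.
have Si : S ((absz i)%:R)%:E by exists i.
have := le_ereal_inf_tmp S0; have := ereal_inf_lbound Si.
case: (ereal_inf S) => [r||]//= ri r0; rewrite lee_fin in ri.
by rewrite ler_powR ?ler1n// lerN2 (le_trans ri)// ler_nat.
Qed.

Lemma dX_open_measurable (U : set SSa) : dX_open R U -> measurable (U : set (SSB R a0)).
Proof. exact: sub_sigma_algebra. Qed.

Lemma dX_open_preimage_cyl k m (a : SSa) : dX_open R (iter k sh @^-1` cyl m a).
Proof.
move=> w wa; exists (2 `^ (- (m + k)%N%:R)); first by rewrite powR_gt0.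
move=> v dv i im /=; rewrite iter_shiftE (dX_lt_agree dv); last by lia.
by rewrite -iter_shiftE; exact: wa.
Qed.

Lemma dX_open_setC_SFT (Xs : set SSa) : is_SFT Xs -> dX_open R (~` Xs).
Proof.
move=> [N [W ->]] x /= /existsNP [i xi].
exists (2 `^ (- (absz i + N)%N%:R)); first by rewrite powR_gt0.
move=> v dv vX; apply: xi; rewrite (_ : [tuple _ | j < N] = [tuple v (i + j%:Z) | j < N]) //.
apply: eq_mktuple => j; rewrite (dX_lt_agree dv)//; have := ltn_ord j; lia.
Qed.

Lemma measurable_SFT (Xs : set SSa) : is_SFT Xs -> measurable (Xs : set (SSB R a0)).
Proof. by move=> /dX_open_setC_SFT/dX_open_measurable/measurableC; rewrite setCK. Qed.

Lemma SFT_shift (Xs : set SSa) : is_SFT Xs -> forall x, Xs (sh x) <-> Xs x.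
Proof.
move=> [N [W ->]] x /=; split => xW i.
  by have := xW (i - 1); congr (_ \in W); apply: eq_mktuple => j; rewrite /shift addrAC subrK.
by have := xW (i + 1); congr (_ \in W); apply: eq_mktuple => j; rewrite /shift addrAC.
Qed.

Lemma SFT_iter_shift (Xs : set SSa) : is_SFT Xs -> forall k x, Xs (iter k sh x) <-> Xs x.
Proof.
move=> SFT; elim=> [//|k IH] x /=.
by rewrite -(IH x); exact: SFT_shift.
Qed.

Lemma eq_cyl m (a b : SSa) : (forall i, (absz i <= m)%N -> a i = b i) -> cyl m a = cyl m b.
Proof. by move=> ab; apply/seteqP; split => z /= za i im; rewrite za// ab. Qed.

Section central_partition.
Variables (Xs : set SSa) (beta : set (set SSa)).
Hypothesis beta_central : central_partition Xs beta.

Lemma central_partition_sub B : beta B -> B `<=` Xs.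
Proof. by case: beta_central => m -> [x _ <-] z []. Qed.

Lemma central_partition_cover x : Xs x -> exists2 B, beta B & B x.
Proof.
case: beta_central => m -> Xx.
by exists (Xs `&` cyl m x) => //; exists x.
Qed.

Lemma central_partition_triv : trivIset beta id.
Proof.
case: beta_central => m -> _ _ [x _ <-] [x' _ <-] [z [[_ zx] [_ zx']]].
by congr (_ `&` _); apply: eq_cyl => i im; rewrite -zx// -zx'.
Qed.

Lemma central_partition_finite : finite_set beta.
Proof.
case: beta_central => m ->.
(* [word t] places the central word [t] at the indices -m..m of A^Z. *)
pose word (t : {ffun 'I_(m + m).+1 -> A}) : SSa := fun i => t (inord (absz (i + m%:Z))).
apply: (@sub_finite_set _ _ ((fun t => Xs `&` cyl m (word t)) @` setT)); last first.
  by apply: finite_image; exact: finite_finset.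
move=> _ [x Xx <-]; exists [ffun j : 'I_(m + m).+1 => x (j%:Z - m%:Z)] => //.
congr (_ `&` _); apply: eq_cyl => i im; rewrite /word ffunE inordK; last by lia.
by congr x; lia.
Qed.

Lemma measurable_preimage_central k B : is_SFT Xs -> beta B ->
  measurable (iter k sh @^-1` B : set (SSB R a0)).
Proof.
case: beta_central => m -> SFT [x _ <-]; rewrite preimage_setI.
apply: measurableI; last by apply: dX_open_measurable; exact: dX_open_preimage_cyl.
rewrite (_ : _ @^-1` Xs = Xs); first exact: measurable_SFT.
by apply/seteqP; split => z /=; rewrite SFT_iter_shift.
Qed.

End central_partition.

Section join_iter.
Variables (be : set (set SSa)) (n : nat).
Local Notation J := (join_iter be n).

Lemma join_iter_iter_cell C x x' k : J C -> C x -> C x' -> (k < n)%N ->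
  exists2 B, be B & B (iter k sh x) /\ B (iter k sh x').
Proof.
move=> [_ [B [bB ->]]] Cx Cx' kn.
by exists (B k); [exact: bB|split; [exact: Cx|exact: Cx']].
Qed.

Lemma join_iter_cover x : (forall k, exists2 B, be B & B (iter k sh x)) ->
  exists2 C, J C & C x.
Proof.
move=> cover; have /choice [B bB] : forall k, exists B, be B /\ B (iter k sh x).
  by move=> k; have [B ? ?] := cover k; exists B.
pose C := \bigcap_(k in [set k | (k < n)%N]) (iter k sh @^-1` B k).
have Cx : C x by move=> k _; exact: (bB k).2.
by exists C => //; split; [exists x|exists B; split => // k _; exact: (bB k).1].
Qed.

Lemma join_iter_triv : trivIset be id -> trivIset J id.
Proof.
move=> be_triv _ _ [_ [B [bB ->]]] [_ [B' [bB' ->]]] [z [zB zB']].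
have BB' k : (k < n)%N -> B k = B' k.
  move=> kn; apply: be_triv (bB k kn) (bB' k kn) _.
  by exists (iter k sh z); split; [exact: zB|exact: zB'].
by apply/seteqP; split => w wB k kn /=; [rewrite -BB'|rewrite BB'] => //; exact: wB.
Qed.

Lemma measurable_join_iter C :
  (forall k B, be B -> measurable (iter k sh @^-1` B : set (SSB R a0))) ->
  J C -> measurable (C : set (SSB R a0)).
Proof.
move=> mB [_ [B [bB ->]]].
by apply: bigcap_measurableType => k kn; exact: mB (bB k kn).
Qed.

End join_iter.

Lemma join_iter_finite (be : set (set SSa)) n : finite_set be -> finite_set (join_iter be n).
Proof.
move=> be_fin.
(* Dropping the nonemptiness condition of [join_iter] makes the family grow by
   one intersection per step. *)
pose K m := [set \bigcap_(k in [set k | (k < m)%N]) (iter k sh @^-1` B k) |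
  B in [set B : nat -> set SSa | forall k, (k < m)%N -> be (B k)]].
apply: (@sub_finite_set _ _ (K n)) => [C [_ [B [bB ->]]]|]; first by exists B.
elim: n => [|n IH].
  apply: (@sub_finite_set _ _ [set setT]) => [_ [B _ <-]|]; last exact: finite_set1.
  by apply/seteqP; split => // z _ k.
apply: (@sub_finite_set _ _ [set C `&` iter n sh @^-1` B | C in K n & B in be]).
  move=> _ [B bB <-]; exists (\bigcap_(k in [set k | (k < n)%N]) (iter k sh @^-1` B k)).
    by exists B => // k kn; apply: bB; exact: ltnW.
  exists (B n); first exact: bB.
  by rewrite !bigcap_mkord big_ord_recr.
exact: finite_image2.
Qed.

End shift_space.

Lemma lt_part_diam (R : realType) (T : Type) (dist : T -> T -> R) (al : set (set T))
    (de : R) C x y :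
  (part_diam dist al < de%:E)%E -> al C -> C x -> C y -> dist x y < de.
Proof.
move=> al_de aC Cx Cy; rewrite -lte_fin; apply: le_lt_trans al_de.
apply: (@le_trans _ _ (diam dist C)); apply: ereal_sup_ubound; last by exists C.
by exists x => //; exists y.
Qed.

Lemma finite_meas_partition_triv d (T : measurableType d) (al : set (set T)) :
  finite_meas_partition al -> trivIset al id.
Proof.
move=> [_ _ al_disj _] C D aC aD [z CDz]; apply: contrapT => CD.
by rewrite al_disj in CDz.
Qed.

Lemma finite_meas_partition_cover d (T : measurableType d) (al : set (set T)) :
  finite_meas_partition al -> forall z, exists2 C, al C & C z.
Proof. by move=> [_ _ _ al_cov] z; have : setT z by []; rewrite -al_cov => -[C]; exists C. Qed.

Lemma prod_part_triv (T1 T2 : Type) (al : set (set T1)) (be : set (set T2)) :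
  trivIset al id -> trivIset be id -> trivIset (prod_part al be) id.
Proof.
move=> al_triv be_triv _ _ [C aC [D bD <-]] [C' aC' [D' bD' <-]].
move=> [[x y] [[/= Cx Dy] [/= C'x D'y]]].
have -> : C = C' by apply: al_triv => //; exists x.
have -> : D = D' by apply: be_triv => //; exists y.
by [].
Qed.

Lemma prod_part_cover (T1 T2 : Type) (al : set (set T1)) (be : set (set T2))
    (X1 : set T1) (X2 : set T2) :
  (forall x, X1 x -> exists2 C, al C & C x) ->
  (forall y, X2 y -> exists2 D, be D & D y) ->
  forall z, (X1 `*` X2) z -> exists2 E, prod_part al be E & E z.
Proof.
move=> al_cov be_cov [x y] [/al_cov [C aC Cx] /be_cov [D bD Dy]].
by exists (C `*` D) => //; exists C => //; exists D.
Qed.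

Lemma full_probability_ae d (T : measurableType d) (R : realType) (mu : probability T R)
    (U : set T) (Q : T -> Prop) :
  measurable U -> mu U = 1%E -> (forall z, U z -> Q z) -> \forall z \ae mu, Q z.
Proof.
move=> mU muU UQ; exists (~` U); split; first exact: measurableC.
  by rewrite probability_setC// muU subee.
by move=> z /= nQz Uz; exact/nQz/UQ.
Qed.

Lemma mixture_setX_full d1 d2 (T1 : measurableType d1) (T2 : measurableType d2)
    (R : realType) (pi0 : probability T1 R) (mu : T1 -> probability T2 R)
    (P : probability (T1 * T2)%type R) (X : set T2) :
  (forall E, measurable E ->
     P E = (\int[pi0]_th (\int[mu th]_x (\1_E (th, x))%:E))%E) ->
  measurable X -> (forall th, mu th X = 1%E) -> P (setT `*` X) = 1%E.
Proof.
move=> PE mX muX; rewrite PE; last exact: measurableX.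
transitivity (\int[pi0]_th (cst 1%E th))%E.
  apply: eq_integral => th _; transitivity (\int[mu th]_x (\1_X x)%:E)%E.
    by apply: eq_integral => x _; rewrite !indicE in_setX in_setT.
  by rewrite integral_indic// setIT; exact: muX.
by rewrite integral_cst//= mul1e probability_setT.
Qed.

Lemma gn_le_add (R : realType) (Th Y : pmetricType R) (A : finType) (a0 : A)
    (l : Th -> SS a0 -> Y -> R) (T : Y -> Y) (rho : Y -> R) n th th' x x' y :
  (forall k, (k < n)%N ->
     `|l th (iter k (@shift A a0) x) (iter k T y)
       - l th' (iter k (@shift A a0) x') (iter k T y)| <= rho (iter k T y)) ->
  gn l T n th x y <= gn l T n th' x' y + \sum_(k < n) rho (iter k T y).
Proof.
move=> l_rho; rewrite /gn lerNl opprD opprK -sumrN -big_split /=.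
apply: ler_sum => k _; have := l_rho k (ltn_ord k).
by rewrite ler_norml => /andP[+ _]; lra.
Qed.

Theorem lemma7p2 (R : realType)
  (Th Y : pmetricType R) (A : finType) (a0 : A) (Xs : set (SS a0))
  (T : Y -> Y) (nu : probability (Borel Y) R)
  (f : Th -> SS a0 -> R) (mu : Th -> probability (SSB R a0) R)
  (l : Th -> SS a0 -> Y -> R) (lstar : Y -> R) (rho : R -> Y -> R)
  (pi0 : probability (Borel Th) R)
  (P0 : probability (Borel Th * SSB R a0)%type R) :
  (* observed system *)
  metric_complete Y -> metric_separable Y ->
  measurable_fun setT (T : Borel Y -> Borel Y) ->
  T_invariant nu T -> T_ergodic nu T ->
  (* model system *)
  is_SFT Xs -> top_mixing R Xs ->
  compact [set: Th] ->
  regular_family Xs f -> (forall th, is_Gibbs Xs (f th) (mu th)) ->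
  (* loss *)
  loss_continuous Xs l ->
  (forall th x y, Xs x -> `|l th x y| <= lstar y) ->
  nu.-integrable setT (fun y => (lstar y)%:E) ->
  (forall de : R, 0 < de ->
     measurable_fun setT (rho de : Borel Y -> R) /\ (forall y, 0 < rho de y)) ->
  (forall de : R, 0 < de -> forall th th' x x' y, Xs x -> Xs x' ->
     mdist th th' <= de -> dX x x' <= de ->
     `|l th x y - l th' x' y| <= rho de y) ->
  (forall e : R, 0 < e -> exists2 r : R, 0 < r &
     forall de : R, 0 < de < r -> (\int[nu]_y (rho de y)%:E < e%:E)%E) ->
  (* prior *)
  full_support pi0 ->
  (forall E : set (Borel Th * SSB R a0)%type, measurable E ->
     P0 E = (\int[pi0]_th (\int[mu th]_x (\1_E (th, x))%:E))%E) ->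
  (* the lemma *)
  forall (de : R) (alpha : set (set Th)) (beta : set (set (SS a0))),
  0 < de ->
  finite_meas_partition (alpha : set (set (Borel Th))) ->
  (part_diam mdist alpha < de%:E)%E ->
  central_partition Xs beta ->
  (part_diam dX beta < de%:E)%E ->
  forall (eta : probability (Borel Th * SSB R a0)%type R),
  eta (setT `*` Xs) = 1%E ->
  forall (y : Y) (n : nat), (1 <= n)%N ->
  (\int[eta]_z (gn l T n z.1 z.2 y)%:E
     - KL eta P0 (prod_part alpha (join_iter beta n)) <=
   (ln (fine (\int[P0]_z (expR (gn l T n z.1 z.2 y))%:E))
     + \sum_(k < n) rho de (iter k T y))%:E)%E.
Proof.
move=> _ _ _ _ _ SFT _ _ _ Gibbs _ _ _ _ l_rho _ _ P0E de alpha beta de0 alpha_part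
  alpha_diam beta_central beta_diam eta etaU y n _.
pose J := join_iter beta n; have [alpha_fin alpha_meas _ _] := alpha_part.
have mXs := measurable_SFT (R:=R) SFT.
have mU : measurable (setT `*` Xs : set (Borel Th * SSB R a0)%type) by exact: measurableX.
have P0U : P0 (setT `*` Xs) = 1%E.
  by apply: mixture_setX_full P0E mXs _ => th; case: (Gibbs th).
have cover z : (setT `*` Xs) z -> exists2 C, prod_part alpha J C & C z.
  apply: prod_part_cover z => [th _|x Xx].
    exact: (finite_meas_partition_cover alpha_part).
  apply: join_iter_cover => k; apply: (central_partition_cover beta_central).
  exact/(SFT_iter_shift SFT).
apply: (@KL_variational_bound _ _ _ eta P0 (prod_part alpha J)).
- apply: finite_image2 alpha_fin _.
  exact/join_iter_finite/(central_partition_finite beta_central).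
- move=> _ [C aC [B jB <-]]; apply: measurableX; first exact: alpha_meas.
  apply: measurable_join_iter jB => k B' bB'.
  exact: (measurable_preimage_central beta_central k SFT bB').
- apply: prod_part_triv; first exact: finite_meas_partition_triv alpha_part.
  exact/join_iter_triv/(central_partition_triv beta_central).
- exact: full_probability_ae mU etaU cover.
- exact: full_probability_ae mU P0U cover.
- move=> _ z z' [C aC [B jB <-]] [Cz Bz] [Cz' Bz']; apply: gn_le_add => k kn.
  have [B' bB' [B'z B'z']] := join_iter_iter_cell jB Bz Bz' kn.
  have B'Xs := central_partition_sub beta_central bB'.
  apply: l_rho => //; [exact: B'Xs|exact: B'Xs|..].
  - exact: ltW (lt_part_diam alpha_diam aC Cz Cz').
  - exact: ltW (lt_part_diam beta_diam bB' B'z B'z').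
Qed.
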